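(* Let $n\geqslant 2$. For any integers $p_1,p_2$ with $2 \leqslant p_1 < p_2$ and any $\varepsilon \in (0,1)$, $\mathcal Y(\varepsilon,p_2) \subset \mathcal Y(\varepsilon,p_1)$ (proper inclusion).
   Context: For $\bm x \in \mathbb{R}^n_{\geqslant 0}$ and $p\geqslant 1$, $\|\bm x\|_p = (\sum_{i=1}^n x_i^p)^{1/p}$. Define $D_p = n^{1-1/p}-1$. Let $\Delta_n = \{\bm x \in \mathbb{R}^n_{\geqslant 0} : \sum_{i=1}^n x_i = 1\}$, and for $\varepsilon\in[0,1]$ and integer $p\geqslant 2$ let $\mathcal Y(\varepsilon,p) = \{\bm x \in \Delta_n : (1+\varepsilon D_p)\|\bm x\|_p \leqslant 1\}$. *)

From HB Require Import structures.
From mathcomp Require Import all_boot all_order all_algebra.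
From mathcomp Require Import all_classical all_reals all_analysis.
Set Implicit Arguments. Unset Strict Implicit. Unset Printing Implicit Defensive.
Import Order.TTheory GRing.Theory Num.Theory.
Local Open Scope ring_scope.
Local Open Scope classical_set_scope.

(* ||x||_p = (sum_i x_i^p)^(1/p), for integer p >= 1 and x >= 0 *)
Definition pnorm (R : realType) (n p : nat) (x : 'I_n -> R) : R :=
  powR (\sum_(i < n) x i ^+ p) (p%:R^-1).

Definition Dp (R : realType) (n p : nat) : R :=
  powR (n%:R) (1 - p%:R^-1) - 1.

Definition simplex (R : realType) (n : nat) : set ('I_n -> R) :=
  [set x | (forall i, 0 <= x i) /\ \sum_(i < n) x i = 1].

Definition Yset (R : realType) (n : nat) (eps : R) (p : nat) : set ('I_n -> R) :=
  [set x | @simplex R n x /\ (1 + eps * @Dp R n p) * @pnorm R n p x <= 1].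

(** Write [r p = 1 - 1/p], [s = r p1 / r p2 \in (0, 1)] and [a = n `^ r p2 > 1], so that
    [1 + eps * Dp p2 = 1 + eps (a - 1)] and [1 + eps * Dp p1 = 1 + eps (a `^ s - 1)].
    Jensen's inequality for the concave map [t |-> t `^ w], with the coordinates of [x] as
    weights, gives the interpolation bound [||x||_p1 <= ||x||_p2 `^ s] on the simplex, and
    strict concavity of [t |-> t `^ s] gives [1 + eps (a `^ s - 1) < (1 + eps (a - 1)) `^ s];
    together they yield the inclusion.  For properness, the p2-norm takes every value between
    its value [1/a] at the barycentre and its value [1] at a vertex, so some [x] in the simplex
    has [||x||_p2 `^ s = 1 / (1 + eps * Dp p1)]: it lies in [Y(eps, p1)] and, by the strict
    inequality, not in [Y(eps, p2)]. *)

From HB Require Import structures.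
From mathcomp Require Import all_boot all_order all_algebra.
From mathcomp Require Import all_classical all_reals all_analysis.
From mathcomp Require Import ring zify.
Set Implicit Arguments.
Unset Strict Implicit.
Unset Printing Implicit Defensive.
Import Order.TTheory GRing.Theory Num.Theory.
Local Open Scope ring_scope.
Local Open Scope classical_set_scope.

Section PowRConcavity.
Variable R : realType.
Implicit Types (a b t w z : R).

Lemma powR_le_tangent z w : 0 <= z -> 0 < w -> w < 1 -> z `^ w <= w * z + (1 - w).
Proof.
move=> z0 w0 w1.
have w'0 : 0 < 1 - w by rewrite subr_gt0.
have := @conjugate_powR R (z `^ w) 1 w^-1 (1 - w)^-1 (powR_ge0 _ _) ler01.
rewrite !invr_gt0 !invrK => /(_ w0 w'0); rewrite addrC subrK => /(_ erefl).
by rewrite -powRrM mulfV ?gt_eqF // powRr1 // powR1 mulr1 mul1r mulrC.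
Qed.

Lemma powR_lt_tangent z w : 0 <= z -> z != 1 -> 0 < w -> w < 1 ->
  z `^ w < w * z + (1 - w).
Proof.
move=> z0 z1 w0 w1.
(* Square the weak inequality at [sqrt z]: the defect is [w (1 - w) (sqrt z - 1)^2 > 0]. *)
set u := Num.sqrt z.
have u0 : 0 <= u by rewrite sqrtr_ge0.
have uz : z = u ^+ 2 by rewrite sqr_sqrtr.
have u1 : u != 1 by apply: contra z1 => /eqP u1; rewrite uz u1 expr1n.
have defect : 0 < w * (1 - w) * (u - 1) ^+ 2.
  by apply: mulr_gt0; [rewrite mulr_gt0 // subr_gt0 | rewrite exprn_even_gt0 //= subr_eq0].
have -> : z `^ w = (u `^ w) ^+ 2 by rewrite uz !expr2 powRM.
apply: (le_lt_trans (y := (w * u + (1 - w)) ^+ 2)).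
  rewrite ler_sqr ?nnegrE ?powR_ge0 ?powR_le_tangent //.
  by apply: addr_ge0; [rewrite mulr_ge0 // ltW | rewrite subr_ge0 ltW].
by rewrite uz -subr_gt0; congr (0 < _): defect; ring.
Qed.

Lemma powR_inv a w : 0 <= a -> a^-1 `^ w = (a `^ w)^-1.
Proof. by move=> a0; rewrite -(powR_inv1 a0) powRAC powR_inv1 // powR_ge0. Qed.

Lemma powR_jensen (I : finType) (c y : I -> R) w :
  (forall i, 0 <= c i) -> \sum_i c i = 1 -> (forall i, 0 <= y i) -> 0 < w -> w < 1 ->
  \sum_i c i * y i `^ w <= (\sum_i c i * y i) `^ w.
Proof.
move=> c0 c1 y0 w0 w1; set m := \sum_i c i * y i.
have cy0 i : 0 <= c i * y i by rewrite mulr_ge0.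
have : 0 <= m by rewrite sumr_ge0.
rewrite le_eqVlt => /predU1P[m0|m_gt0].
  rewrite -m0 powR0 ?gt_eqF // big1 // => i _.
  have /eqP := @psumr_eq0P _ _ predT _ (fun i _ => cy0 i) (esym m0) i isT.
  rewrite mulf_eq0 => /orP[/eqP -> | /eqP ->]; first by rewrite mul0r.
  by rewrite powR0 ?mulr0 ?gt_eqF.
(* tangent line of [_ `^ w] at [m] *)
apply: (le_trans (y := \sum_i c i * (m `^ w * (w * (y i / m) + (1 - w))))).
  apply: ler_sum => i _; rewrite ler_wpM2l //.
  have m_ge0 := ltW m_gt0.
  rewrite -{1}[y i](divfK (lt0r_neq0 m_gt0)) powRM ?divr_ge0 // mulrC.
  by rewrite ler_wpM2l ?powR_ge0 // powR_le_tangent ?divr_ge0.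
rewrite (eq_bigr (fun i => m `^ w * (w / m * (c i * y i) + (1 - w) * c i))); last first.
  by move=> i _; field; rewrite gt_eqF.
by rewrite -mulr_sumr big_split /= -!mulr_sumr c1 -/m divfK ?gt_eqF // mulr1 subrKC mulr1.
Qed.

Lemma powR_strict_concave a b t w : 0 < a -> 0 <= b -> a != b ->
  0 < t -> t < 1 -> 0 < w -> w < 1 ->
  (1 - t) * a `^ w + t * b `^ w < ((1 - t) * a + t * b) `^ w.
Proof.
move=> a0 b0 ab t0 t1 w0 w1; set m := (1 - t) * a + t * b.
have t'0 : 0 < 1 - t by rewrite subr_gt0.
have m_gt0 : 0 < m by apply: ltr_wpDr; rewrite ?mulr_ge0 ?mulr_gt0 // ltW.
have m_ge0 := ltW m_gt0.
have a_ge0 := ltW a0.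
have am : a / m != 1.
  rewrite -(inj_eq (mulIf (lt0r_neq0 m_gt0))) divfK ?lt0r_neq0 // mul1r.
  move: ab; apply: contra => /eqP am.
  have : t * (a - b) = a - m by rewrite /m; ring.
  rewrite {2}am subrr => /eqP.
  by rewrite mulf_eq0 gt_eqF //= subr_eq0.
(* tangent line of [_ `^ w] at [m], strict at [a] *)
have key : (1 - t) * (a / m) `^ w + t * (b / m) `^ w < 1.
  apply: (lt_le_trans (y := (1 - t) * (w * (a / m) + (1 - w)) + t * (w * (b / m) + (1 - w)))).
    apply: ltr_leD; first by rewrite ltr_pM2l // powR_lt_tangent ?divr_ge0 ?ltW.
    by rewrite ler_wpM2l ?powR_le_tangent ?divr_ge0 // ltW.
  have -> : (1 - t) * (w * (a / m) + (1 - w)) + t * (w * (b / m) + (1 - w))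
            = w * (m / m) + (1 - w) by rewrite /m; ring.
  by rewrite divff ?lt0r_neq0 // mulr1 subrKC.
move: key; rewrite !powRM ?invr_ge0 // powR_inv // !mulrA -mulrDl.
by rewrite ltr_pdivrMr ?powR_gt0 // mul1r.
Qed.

End PowRConcavity.

Section SimplexNorms.
Variables (R : realType) (n : nat).
Implicit Types (x : 'I_n -> R) (p q : nat).

Lemma sum_expn_le_powR x p q : simplex x -> (1 < p)%N -> (p < q)%N ->
  \sum_i x i ^+ p <= (\sum_i x i ^+ q) `^ ((p%:R - 1) / (q%:R - 1)).
Proof.
move=> [x0 x1] p1 pq.
have natr_pred k : (0 < k)%N -> k%:R - 1 = k.-1%:R :> R.
  by move=> k0; rewrite -[in LHS](prednK k0) -natr1 addrK.
have [p0 q0] : (0 < p)%N /\ (0 < q)%N by split; lia.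
rewrite !natr_pred //.
set w : R := p.-1%:R / q.-1%:R.
have w0 : 0 < w by rewrite divr_gt0 // ltr0n; lia.
have w1 : w < 1 by rewrite ltr_pdivrMr ?ltr0n ?mul1r ?ltr_nat; lia.
have xp i : x i * (x i ^+ q.-1) `^ w = x i ^+ p.
  rewrite -powR_mulrn // -powRrM mulrCA mulfV ?pnatr_eq0 -?lt0n; last by lia.
  by rewrite mulr1 powR_mulrn // -exprS prednK //; lia.
have xq i : x i * x i ^+ q.-1 = x i ^+ q by rewrite -exprS prednK //; lia.
have := powR_jensen x0 x1 (fun i => exprn_ge0 q.-1 (x0 i)) w0 w1.
by rewrite (eq_bigr _ (fun i _ => xp i)) (eq_bigr _ (fun i _ => xq i)).
Qed.

Lemma pnorm_le_powR x p q : simplex x -> (1 < p)%N -> (p < q)%N ->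
  pnorm p x <= pnorm q x `^ ((1 - p%:R^-1) / (1 - q%:R^-1)).
Proof.
move=> sx p1 pq; have [x0 _] := sx.
have [p0 q0 q1] : [/\ p%:R != 0 :> R, q%:R != 0 :> R & q%:R - 1 != 0 :> R].
  by rewrite !pnatr_eq0 subr_eq0 pnatr_eq1; split; lia.
rewrite /pnorm -powRrM.
apply: (le_trans (y := ((\sum_i x i ^+ q) `^ ((p%:R - 1) / (q%:R - 1))) `^ p%:R^-1)).
  apply: ge0_ler_powR; rewrite ?nnegrE ?invr_ge0 ?ler0n ?powR_ge0 ?sum_expn_le_powR //.
  by rewrite sumr_ge0 // => i _; rewrite exprn_ge0.
rewrite -powRrM [X in _ `^ X <= _](_ : _ = q%:R^-1 * ((1 - p%:R^-1) / (1 - q%:R^-1))) //.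
by field; rewrite p0 q0 q1.
Qed.

Lemma natr_powR_invX p : (0 < n)%N -> (0 < p)%N ->
  (n%:R `^ (1 - p%:R^-1))^-1 ^+ p = n%:R^-1 ^+ p *+ n :> R.
Proof.
move=> n0 p0; have nR0 : n%:R != 0 :> R by rewrite pnatr_eq0 -lt0n.
rewrite exprVn -powR_mulrn ?powR_ge0 // -powRrM.
have -> : (1 - p%:R^-1) * p%:R = p%:R - 1 :> R by field; rewrite pnatr_eq0 -lt0n.
rewrite powRB ?nR0 ?implybT // powR_mulrn // powRr1 // invf_div.
by rewrite -exprVn mulr_natl.
Qed.

Lemma exists_simplex_pnorm p (L : R) : (0 < n)%N -> (0 < p)%N ->
  (n%:R `^ (1 - p%:R^-1))^-1 <= L -> L <= 1 ->
  exists2 x : 'I_n -> R, simplex x & pnorm p x = L.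
Proof.
move=> n0 p0 L_ge L_le1.
have L0 : 0 <= L by apply: le_trans L_ge; rewrite invr_ge0 powR_ge0.
pose i0 : 'I_n := Ordinal n0.
(* Along the segment from the barycentre to a vertex the power sum is a polynomial, hence continuous. *)
pose x (t : R) (i : 'I_n) : R := (1 - t) / n%:R + t * (i == i0)%:R.
pose P : {poly R} :=
  \sum_i ((1 - 'X) * (n%:R^-1)%:P + 'X * ((i == i0)%:R)%:P) ^+ p.
have P_sum t : P.[t] = \sum_i x t i ^+ p.
  by rewrite horner_sum; apply: eq_bigr => i _; rewrite !hornerE.
have sum_vertex (c : R) : \sum_i c * (i == i0)%:R = c.
  by rewrite (bigD1 i0) //= big1 => [|j /negbTE ->]; rewrite ?eqxx ?mulr1 ?addr0 ?mulr0.
have P0 : P.[0] = (n%:R `^ (1 - p%:R^-1))^-1 ^+ p.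
  rewrite P_sum (eq_bigr (fun=> n%:R^-1 ^+ p)) => [|i _]; last first.
    by rewrite /x subr0 mul0r addr0 mul1r.
  by rewrite sumr_const card_ord natr_powR_invX.
have P1 : P.[1] = 1.
  rewrite P_sum -[RHS](sum_vertex 1); apply: eq_bigr => i _.
  by rewrite /x subrr !mul0r add0r !mul1r; case: (i == i0); rewrite ?expr1n ?expr0n ?gtn_eqF.
have [t t01 Pt] : exists2 t, t \in `[0, 1]%R & P.[t] = L ^+ p.
  have P_cont : {within `[0, 1], continuous (horner P)}.
    by apply: continuous_subspaceT => ?; exact: continuous_horner.
  apply: IVT ler01 P_cont _.
  rewrite P0 P1 ge_min le_max lerXn2r ?nnegrE ?invr_ge0 ?powR_ge0 //=.
  by rewrite exprn_ile1 ?orbT.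
move: t01; rewrite in_itv /= => /andP[t0 t1].
exists (x t).
  split=> [i|]; first by rewrite addr_ge0 ?mulr_ge0 ?divr_ge0 ?subr_ge0.
  rewrite big_split /= sum_vertex sumr_const card_ord -[_ *+ n]mulr_natr divfK ?subrK //.
  by rewrite pnatr_eq0 -lt0n.
rewrite /pnorm -P_sum Pt -powR_mulrn // -powRrM mulfV ?powRr1 //.
by rewrite pnatr_eq0 -lt0n.
Qed.

End SimplexNorms.

Section YsetChain.
Variables (R : realType) (n p1 p2 : nat) (eps : R).
Hypotheses (n_gt1 : (1 < n)%N) (p1_gt1 : (1 < p1)%N) (p12 : (p1 < p2)%N).
Hypotheses (eps_gt0 : 0 < eps) (eps_lt1 : eps < 1).

Let s : R := (1 - p1%:R^-1) / (1 - p2%:R^-1).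
Let a : R := n%:R `^ (1 - p2%:R^-1).

Let r_gt0 p : (1 < p)%N -> 0 < 1 - p%:R^-1 :> R.
Proof. by move=> p_gt1; rewrite subr_gt0 invf_lt1 ?ltr1n // ltr0n; lia. Qed.

Let r2_gt0 : 0 < 1 - p2%:R^-1 :> R. Proof. by apply: r_gt0; lia. Qed.

Let s_itv : 0 < s < 1.
Proof.
have r12 : 1 - p1%:R^-1 < 1 - p2%:R^-1 :> R.
  by rewrite ltrD2l ltrN2 ltf_pV2 ?posrE ?ltr_nat ?ltr0n //; lia.
rewrite divr_gt0 ?r2_gt0 ?r_gt0 //=.
by rewrite /s ltr_pdivrMr ?mul1r.
Qed.

Let a_gt1 : 1 < a.
Proof.
apply: (le_lt_trans (y := 1 `^ (1 - p2%:R^-1))); first by rewrite powR1.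
by rewrite gt0_ltr_powR ?nnegrE ?ler0n ?ltr1n.
Qed.

Let Dp_p1 : Dp R n p1 = a `^ s - 1.
Proof. by rewrite /Dp /a -powRrM mulrC divfK ?lt0r_neq0. Qed.

Lemma scale_Dp_lt_powR : 1 + eps * Dp R n p1 < (1 + eps * Dp R n p2) `^ s.
Proof.
have [s0 s1] := andP s_itv.
have := powR_strict_concave ltr01 (ltW (lt_trans ltr01 a_gt1)) (negbT (lt_eqF a_gt1)) eps_gt0 eps_lt1 s0 s1.
rewrite powR1 Dp_p1 /Dp -/a.
congr (_ < _ `^ _); ring.
Qed.

Let M := 1 + eps * Dp R n p2.
Let K := 1 + eps * Dp R n p1.

Let M_le_a : M <= a.
Proof.
rewrite /M /Dp -/a -subr_ge0 (_ : _ - _ = (1 - eps) * (a - 1)); last by ring.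
by rewrite mulr_ge0 // subr_ge0 ltW // a_gt1.
Qed.

Let M_gt0 : 0 < M.
Proof. by rewrite /M /Dp -/a ltr_wpDr ?mulr_ge0 ?subr_ge0 ?ltW ?a_gt1. Qed.

Let K_ge1 : 1 <= K.
Proof.
rewrite /K Dp_p1 lerDl; apply: mulr_ge0; rewrite ?subr_ge0 ?(ltW eps_gt0) //.
have [s0 _] := andP s_itv.
apply: (le_trans (y := 1 `^ s)); first by rewrite powR1.
have a1 := a_gt1; have a0 := lt_trans ltr01 a1.
by rewrite ge0_ler_powR ?nnegrE ?ltW.
Qed.

Lemma Yset_subset : @Yset R n eps p2 `<=` @Yset R n eps p1.
Proof.
move=> x [sx]; rewrite -/M => Yx; split; rewrite // -/K.
have [s0 _] := andP s_itv.
have K_ge0 : 0 <= K by rewrite (le_trans ler01).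
have N2 : pnorm p2 x <= M^-1 by rewrite -[M^-1]mulr1 ler_pdivlMl.
apply: (le_trans (ler_wpM2l K_ge0 (pnorm_le_powR sx p1_gt1 p12))).
apply: (le_trans (y := K * M^-1 `^ s)).
  by rewrite ler_wpM2l // ge0_ler_powR ?nnegrE ?invr_ge0 ?(ltW s0) ?(ltW M_gt0) ?powR_ge0.
by rewrite powR_inv ?(ltW M_gt0) // ler_pdivrMr ?powR_gt0 // mul1r ltW // scale_Dp_lt_powR.
Qed.

Lemma Yset_witness : exists2 x, @Yset R n eps p1 x & ~ @Yset R n eps p2 x.
Proof.
have [s0 s1] := andP s_itv.
(* A point of p2-norm [L] has [K * pnorm p1 x <= K * L `^ s = 1] but [M * L > 1]. *)
have K_gt0 : 0 < K by rewrite (lt_le_trans ltr01).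
have Kinv_itv : 0 < K^-1 <= 1 by rewrite invr_gt0 K_gt0 invf_le1.
set L := K^-1 `^ s^-1.
have Ls : L `^ s = K^-1.
  by rewrite -powRrM mulVf ?lt0r_neq0 // powRr1 // invr_ge0 ltW.
have L_le1 : L <= 1.
  have s'1 : 1 <= s^-1 by rewrite invf_ge1 // ltW.
  by rewrite (le_trans (ge1r_powR Kinv_itv s'1)) //; case/andP: Kinv_itv.
have M_lt_L : M^-1 < L.
  have -> : M^-1 = (M^-1 `^ s) `^ s^-1.
    by rewrite -powRrM mulfV ?lt0r_neq0 // powRr1 // invr_ge0 ltW.
  rewrite gt0_ltr_powR ?invr_gt0 ?nnegrE ?powR_ge0 ?invr_ge0 ?(ltW K_gt0) // powR_inv ?(ltW M_gt0) //.
  by rewrite ltf_pV2 ?posrE ?powR_gt0 // scale_Dp_lt_powR.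
have L_ge : a^-1 <= L.
  have a_gt0 := lt_trans ltr01 a_gt1.
  by apply: (le_trans _ (ltW M_lt_L)); rewrite lef_pV2 ?posrE.
have n_gt0 : (0 < n)%N := ltnW n_gt1.
have p2_gt0 : (0 < p2)%N := leq_ltn_trans (leq0n p1) p12.
have [x sx xL] := exists_simplex_pnorm n_gt0 p2_gt0 L_ge L_le1.
exists x.
  split=> //; rewrite -/K -(mulfV (lt0r_neq0 K_gt0)) ler_wpM2l ?(ltW K_gt0) // -Ls -xL.
  exact: pnorm_le_powR.
case=> _; rewrite -/M xL; apply/negP; rewrite -ltNge.
by rewrite -ltr_pdivrMl // mulr1.
Qed.

End YsetChain.

Theorem theorem2 (R : realType) (n : nat) (hn : (2 <= n)%N)
  (p1 p2 : nat) (hp1 : (2 <= p1)%N) (hp12 : (p1 < p2)%N)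
  (eps : R) (heps0 : 0 < eps) (heps1 : eps < 1) :
  @Yset R n eps p2 `<=` @Yset R n eps p1 /\ @Yset R n eps p2 <> @Yset R n eps p1.
Proof.
split; first exact: Yset_subset.
have [x Y1x Y2x] := Yset_witness hn hp1 hp12 heps0 heps1.
by move=> Y21; apply: Y2x; rewrite Y21.
Qed.
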